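(* Let $X$ be a long space and let $M$ be a metrizable topological group. For a compact subset $K\subseteq X$, let $C_K(X,M)$ denote the subgroup of $C_{cpt}(X,M)$ consisting of the functions with support contained in $K$, with the subspace topology. Then the family $\{C_K(X,M)\}_{K\in\mathscr{K}(X)}$ (indexed by the set $\mathscr{K}(X)$ of compact subsets of $X$ ordered by inclusion, with inclusions as bonding maps) satisfies ACP, and $$\operatorname*{colim}_{K\in\mathscr{K}(X)} C_K(X,M)=C_{cpt}(X,M),$$ i.e. the colimit space topology on $C_{cpt}(X,M)=\bigcup_{K}C_K(X,M)$ coincides with the uniform topology. Furthermore, if $M$ is a Banach space over $\mathbb{K}\in\{\mathbb{R},\mathbb{C}\}$, then $C_{cpt}(X,M)$ (with the uniform topology) is a Banach space, and it is the colimit of $\{C_K(X,M)\}_{K\in\mathscr{K}(X)}$ in the category $\mathsf{TVS}_{\mathbb K}$ of topological vector spaces over $\mathbb K$ and continuous linear maps, and in its full subcategory $\mathsf{LCTVS}_{\mathbb K}$ of locally convex spaces.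
   Context: A Hausdorff space $X$ is a long space if every $\sigma$-compact subset of $X$ has compact closure (equivalently, every countable family of compact subsets of $X$ is contained in a single compact subset). For a topological space $X$ and topological group $M$, $C_{cpt}(X,M)$ is the group (under pointwise operations) of continuous $f\colon X\to M$ with compact support, where the support of $f$ is $\operatorname{cl}_X\{x\in X\mid f(x)\neq e_M\}$. The uniform topology on $C_{cpt}(X,M)$ is the topology induced by the metric $d(f_1,f_2)=\sup_{x\in X}\rho(f_1(x),f_2(x))$, where $\rho$ is a metric compatible with the topology of $M$. For a directed family $\{G_\alpha\}_{\alpha\in\mathbb I}$ of topological groups whose bonding maps are inclusions that are closed embeddings, with union $G=\bigcup_\alpha G_\alpha$, the colimit space topology is $\mathscr T=\{U\subseteq G\mid U\cap G_\alpha \text{ is open in } G_\alpha \text{ for all }\alpha\}$; the family satisfies ACP (the algebraic colimit property) if $\mathscr T$ coincides with the finest group topology on $G$ making all inclusions $G_\alpha\to G$ continuous, equivalently if $(G,\mathscr T)$ is a topological group. The notation $\operatorname{colim}$ refers to $G$ with the colimit space topology. *)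

From HB Require Import structures.
From mathcomp Require Import all_boot all_order all_algebra.
From mathcomp Require Import all_classical all_reals all_analysis.
From mathcomp Require Import complex.

Set Implicit Arguments.
Unset Strict Implicit.
Unset Printing Implicit Defensive.

Import Order.TTheory GRing.Theory Num.Theory.
Local Open Scope classical_set_scope.
Local Open Scope ring_scope.

Definition sigma_compact (X : topologicalType) (S : set X) : Prop :=
  exists A : nat -> set X, (forall n, compact (A n)) /\ S = \bigcup_n A n.

Definition long_space (X : topologicalType) : Prop :=
  hausdorff_space X /\
  forall S : set X, sigma_compact S -> compact (closure S).

Definition is_topgroup (M : topologicalType) (mul : M -> M -> M) (inv : M -> M)
    (e : M) : Prop :=
  [/\ forall x y z, mul x (mul y z) = mul (mul x y) z,
      forall x, mul e x = x /\ mul x e = x,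
      forall x, mul (inv x) x = e /\ mul x (inv x) = e,
      continuous (fun p : M * M => mul p.1 p.2) &
      continuous inv].

Definition compatible_metric (R : realType) (M : topologicalType)
    (rho : M -> M -> R) : Prop :=
  [/\ forall x y, 0 <= rho x y,
      forall x y, rho x y = 0 <-> x = y,
      forall x y, rho x y = rho y x,
      forall x y z, rho x z <= rho x y + rho y z &
      forall U : set M, open U <->
        (forall x, U x -> exists2 eps : R, 0 < eps &
           forall y, rho x y < eps -> U y)].

Section FunSpaces.
Context (X M : topologicalType) (e : M).

Definition supp (f : X -> M) : set X := closure [set x | f x <> e].

Definition Ccpt : set (X -> M) :=
  [set f | continuous f /\ compact (supp f)].

Definition CK (K : set X) : set (X -> M) :=
  [set f | Ccpt f /\ supp f `<=` K].

Context (R : numDomainType) (rho : M -> M -> R).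

(** [dlt f g eps] : d(f,g) = sup_x rho(f x, g x) < eps, unfolded as
    "some upper bound of {rho (f x) (g x)} is < eps". *)
Definition dlt (f g : X -> M) (eps : R) : Prop :=
  exists2 delta : R, delta < eps & forall x, rho (f x) (g x) <= delta.

Definition uopen (U : set (X -> M)) : Prop :=
  U `<=` Ccpt /\
  forall f, U f -> exists2 eps : R, 0 < eps &
     forall g, Ccpt g -> dlt f g eps -> U g.

Definition sub_open (S V : set (X -> M)) : Prop :=
  exists2 W, uopen W & V = W `&` S.

(** open sets of the colimit space topology of {C_K}_{K compact} *)
Definition colim_open (U : set (X -> M)) : Prop :=
  U `<=` Ccpt /\ forall K : set X, compact K -> sub_open (CK K) (U `&` CK K).

End FunSpaces.

Section GroupTop.
Context (X M : topologicalType) (mul : M -> M -> M) (inv : M -> M).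

Definition fmul (f g : X -> M) : X -> M := fun x => mul (f x) (g x).
Definition finv (f : X -> M) : X -> M := fun x => inv (f x).

Definition is_topology (G : set (X -> M)) (tau : set (X -> M) -> Prop) : Prop :=
  [/\ forall U, tau U -> U `<=` G,
      tau G,
      forall F : set (set (X -> M)), (forall U, F U -> tau U) ->
        tau (\bigcup_(U in F) U) &
      forall U V, tau U -> tau V -> tau (U `&` V)].

Definition is_group_topology (G : set (X -> M)) (tau : set (X -> M) -> Prop) :
    Prop :=
  [/\ is_topology G tau,
      forall f g, G f -> G g -> G (fmul f g),
      forall f, G f -> G (finv f),
      (forall U f g, tau U -> G f -> G g -> U (fmul f g) ->
         exists V W, [/\ tau V, tau W, V f, W g &
           forall f' g', V f' -> W g' -> U (fmul f' g')]) &
      forall U, tau U -> tau [set f | G f /\ U (finv f)]].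

End GroupTop.

(** * ACP for the family {C_K(X,M)}_{K compact}, with union C_cpt(X,M):
    the colimit space topology is the finest group topology on C_cpt(X,M)
    making all inclusions C_K(X,M) -> C_cpt(X,M) continuous. *)
Definition ACP_CK (X M : topologicalType) (mul : M -> M -> M) (inv : M -> M)
    (e : M) (R : numDomainType) (rho : M -> M -> R) : Prop :=
  is_group_topology mul inv (Ccpt e : set (X -> M)) (colim_open e rho) /\
  forall tau : set (X -> M) -> Prop,
    is_group_topology mul inv (Ccpt e : set (X -> M)) tau ->
    (forall K : set X, compact K ->
       forall U, tau U -> sub_open e rho (CK e K) (U `&` CK e K)) ->
    forall U, tau U -> colim_open e rho U.

Section Banach.
Context (K : numFieldType) (X : topologicalType) (M : completeNormedModType K).

Definition nrho (x y : M) : K := `|x - y|.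

Notation Cc := (Ccpt (0 : M) : set (X -> M)).
Notation CKb C := (CK (0 : M) C : set (X -> M)).

Definition Ccpt_banach : Prop :=
  [/\ Cc (fun _ => 0),
      forall (a : K) f g, Cc f -> Cc g -> Cc (fun x => a *: f x + g x),
      forall f, Cc f -> exists B : K, forall x, `|f x| <= B &
      forall u : nat -> X -> M, (forall n, Cc (u n)) ->
        (forall eps : K, 0 < eps -> exists N, forall m n, (N <= m)%N -> (N <= n)%N ->
            dlt nrho (u m) (u n) eps) ->
        exists2 f, Cc f & forall eps : K, 0 < eps ->
            exists N, forall n, (N <= n)%N -> dlt nrho (u n) f eps].

Definition lin_on (E : lmodType K) (S : set (X -> M)) (psi : (X -> M) -> E) :=
  forall (a : K) f g, S f -> S g ->
    psi (fun x => a *: f x + g x) = a *: psi f + psi g.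

Definition cont_on (E : topologicalType) (S : set (X -> M)) (psi : (X -> M) -> E) :=
  forall W : set E, open W -> sub_open 0 nrho S (S `&` psi @^-1` W).

Definition colim_univ (E : topologicalLmodType K) : Prop :=
  forall phi : set X -> (X -> M) -> E,
    (forall C, compact C -> lin_on (CKb C) (phi C) /\ cont_on (CKb C) (phi C)) ->
    (forall C D, compact C -> compact D -> C `<=` D ->
        forall f, CKb C f -> phi D f = phi C f) ->
    (exists psi : (X -> M) -> E,
        [/\ lin_on Cc psi, cont_on Cc psi &
            forall C, compact C -> forall f, CKb C f -> psi f = phi C f]) /\
    (forall psi1 psi2 : (X -> M) -> E,
        (lin_on Cc psi1 /\ cont_on Cc psi1 /\
           forall C, compact C -> forall f, CKb C f -> psi1 f = phi C f) ->
        (lin_on Cc psi2 /\ cont_on Cc psi2 /\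
           forall C, compact C -> forall f, CKb C f -> psi2 f = phi C f) ->
        forall f, Cc f -> psi1 f = psi2 f).

Definition incl_cocone : Prop :=
  forall C, compact C ->
    forall U, uopen 0 nrho U -> sub_open 0 nrho (CKb C) (U `&` CKb C).

Definition banach_part : Prop :=
  [/\ Ccpt_banach,
      incl_cocone,
      (forall E : topologicalLmodType K, colim_univ E) &
      (forall E : tvsType K, colim_univ E)].

End Banach.

(* Since X is long, countably many compactly supported functions f_n all lie
   in a single C_K, namely for K the closure of the union of their supports.
   Hence if U is open in the colimit topology, f is in U, and g_n -> f
   uniformly with g_n outside U, then f and the g_n lie in one C_K, where
   U meets C_K in a uniformly open set: a contradiction.  So the colimit
   topology is the uniform one.  The uniform topology is a group topology
   because multiplication and inversion are uniformly continuous on the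
   compact ranges of the functions involved, and ACP follows.  In the Banach
   case the same observation shows that a uniform limit of a Cauchy sequence
   in C_cpt(X,M) is compactly supported, and a compatible family of maps
   phi_K : C_K(X,M) -> E is glued into f |-> phi_(supp f) f, which is
   continuous because the colimit topology is the uniform one. *)

From Pilot Require Import Defs.
From HB Require Import structures.
From mathcomp Require Import all_boot all_order all_algebra.
From mathcomp Require Import all_classical all_reals all_analysis.
From mathcomp Require Import complex ring.

Local Open Scope classical_set_scope.
Local Open Scope ring_scope.
Local Open Scope complex_scope.

Import Order.TTheory GRing.Theory Num.Theory.

(* [R[i]] has no [archiNumFieldType] instance, hence this predicate. *)
Definition archimedean (K : numDomainType) : Prop :=
  forall x : K, 0 < x -> exists n : nat, x < n%:R.

Lemma archi_archimedean (R : archiNumDomainType) : archimedean R.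
Proof.
by move=> x x0; exists (Num.truncn x).+1; exact/real_truncnS_gt/gtr0_real.
Qed.

Lemma archimedean_complex (R : rcfType) : archimedean R -> archimedean R[i].
Proof.
move=> archR x; rewrite ltcE => /andP [/eqP Im0 /archR [n Ren]]; exists n.
by rewrite -(rmorph_nat (real_complex R)) ltcE /= Im0 eqxx.
Qed.

Lemma half_lt {K : numFieldType} {x : K} : 0 < x -> x / 2 < x.
Proof. by move=> x0; rewrite ltr_pdivrMr // ltr_pMr // ltr1n. Qed.

Lemma ltr_add3_third (K : numFieldType) (a b c eps : K) :
  a < eps / 3 -> b < eps / 3 -> c < eps / 3 -> a + b + c < eps.
Proof.
move=> aeps beps ceps; have := ltrD (ltrD aeps beps) ceps.
suff -> : eps / 3 + eps / 3 + eps / 3 = eps by [].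
by field.
Qed.

Lemma archimedean_invS_le {K : numFieldType} : archimedean K ->
  forall eps : K, 0 < eps -> exists n : nat, n.+1%:R^-1 <= eps.
Proof.
move=> archK eps eps0; have [n epsn] : exists n : nat, eps^-1 < n%:R.
  by apply: archK; rewrite invr_gt0.
exists n; apply: ltW; rewrite invf_plt ?posrE ?ltr0Sn //.
by apply: (lt_le_trans epsn); rewrite ler_nat.
Qed.

Section CompactSupport.
Context {X M : topologicalType} {e : M}.

Lemma notin_supp {f : X -> M} {x : X} : ~ supp e f x -> f x = e.
Proof. by move=> nfx; apply: contrapT => fx; apply: nfx; exact: subset_closure.
Qed.

Lemma compact_supp_comb {f g h : X -> M} :
  compact (supp e f) -> compact (supp e g) ->
  (forall x, f x = e -> g x = e -> h x = e) -> compact (supp e h).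
Proof.
move=> cf cg fgh; apply: (subclosed_compact _ (compactU cf cg)).
  exact: closed_closure.
rewrite -closureU; apply: closureS => x /= hx.
apply: contrapT => /not_orP [/contrapT fx /contrapT gx].
by apply: hx; exact: fgh.
Qed.

Lemma Ccpt_compact_range {f : X -> M} : Ccpt e f ->
  exists2 L, compact L & forall x, L (f x).
Proof.
move=> [cf sf]; exists (f @` supp e f `|` [set e]).
  apply: compactU; last exact: compact_set1.
  by apply: continuous_compact => //; exact: continuous_subspaceT.
move=> x; have [sx|nsx] := pselect (supp e f x); first by left; exists x.
by right; rewrite /= (notin_supp nsx).
Qed.

Lemma long_space_CK (hX : long_space X) {u : nat -> X -> M} :
  (forall n, Ccpt e (u n)) -> exists2 K, compact K & forall n, CK e K (u n).
Proof.
move=> Cu; exists (closure (\bigcup_n supp e (u n))).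
  by apply: hX.2; exists (fun n => supp e (u n)); split=> // n; case: (Cu n).
by move=> n; split=> // x unx; apply: subset_closure; exists n.
Qed.

End CompactSupport.

Section UniformTopology.
Context (X M : topologicalType) (e : M) (R : numDomainType) (rho : M -> M -> R).

Lemma dlt_le_trans (f g : X -> M) a b :
  dlt rho f g a -> a <= b -> dlt rho f g b.
Proof. by case=> d da fgd ab; exists d => //; exact: lt_le_trans ab. Qed.

Lemma dlt_lt (f g : X -> M) eps :
  dlt rho f g eps -> forall x, rho (f x) (g x) < eps.
Proof. by case=> d deps fgd x; exact: le_lt_trans (fgd x) deps. Qed.

Lemma uopen_colim_open (U : set (X -> M)) :
  uopen e rho U -> colim_open e rho U.
Proof. by move=> uU; split=> [|K _]; [case: uU | exists U]. Qed.

(* A function whose support leaves [C] at a point [y] with [f y <> e] cannot be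
   approximated within [rho (f y) e] by functions supported in [C]. *)
Lemma uopen_CcptD_CK (hX : hausdorff_space X) (C : set X) :
  (forall x y, 0 <= rho x y) -> (forall x y, rho x y = 0 <-> x = y) ->
  compact C -> uopen e rho (Ccpt e `\` CK e C).
Proof.
move=> rho_ge0 rho_eq0 cC; split=> [f [] //|f [Cf nCKf]].
have [x [sfx nCx]] : exists x, supp e f x /\ ~ C x.
  apply: contrapT => nex; apply: nCKf; split=> // x sfx.
  by apply: contrapT => nCx; apply: nex; exists x.
have oC : open (~` C) by apply: closed_openC; exact: compact_closed.
have [y [fy nCy]] := sfx _ (open_nbhs_nbhs (conj oC nCx)).
exists (rho (f y) e).
  by rewrite lt_neqAle rho_ge0 andbT; apply/eqP => /esym /rho_eq0.
move=> g Cg /dlt_lt /(_ y) fgy; split=> // -[_ sgC]; apply: nCy; apply: sgC.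
by apply: subset_closure => /= gy; move: fgy; rewrite gy ltxx.
Qed.

Lemma sub_open_CKD (hX : hausdorff_space X) (C D : set X) :
  (forall x y, 0 <= rho x y) -> (forall x y, rho x y = 0 <-> x = y) ->
  compact C -> sub_open e rho (CK e D) (CK e D `\` CK e C).
Proof.
move=> rho_ge0 rho_eq0 cC; exists (Ccpt e `\` CK e C).
  exact: uopen_CcptD_CK.
by apply/seteqP; split=> f [[Cf fD] nfC] //; split.
Qed.

End UniformTopology.

Lemma uopen_topology (X M : topologicalType) (e : M) (R : realDomainType)
    (rho : M -> M -> R) :
  is_topology (Ccpt e) (uopen e rho : set (X -> M) -> Prop).
Proof.
split.
- by move=> U [].
- by split=> // f Cf; exists 1.
- move=> F HF; split=> [f [U FU Uf]|f [U FU Uf]]; first by apply: (HF U FU).1.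
  have [eps eps0 epsU] := (HF U FU).2 f Uf.
  by exists eps => // g Cg fg; exists U => //; apply: epsU.
- move=> U V [UC HU] [VC HV]; split=> [f [/UC] //|f [Uf Vf]].
  have [e1 e10 H1] := HU f Uf; have [e2 e20 H2] := HV f Vf.
  exists (Num.min e1 e2); first by rewrite lt_min e10 e20.
  by move=> g Cg fg; split; [apply: H1 | apply: H2] => //;
    apply: dlt_le_trans fg _; rewrite ge_min lexx ?orbT.
Qed.

Section ColimitTopology.
Context {X M : topologicalType} (e : M) {R : numFieldType} (rho : M -> M -> R).
Hypotheses (hX : long_space X) (archR : archimedean R).

Lemma colim_open_uopen (U : set (X -> M)) :
  colim_open e rho U -> uopen e rho U.
Proof.
move=> [UC colimU]; split=> // f Uf; apply: contrapT => nuopen.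
have /choice [g gP] : forall n,
    exists g, [/\ Ccpt e g, dlt rho f g n.+1%:R^-1 & ~ U g].
  move=> n; apply: contrapT => nex; apply: nuopen.
  exists n.+1%:R^-1 => [|g Cg fg]; first by rewrite invr_gt0 ltr0Sn.
  by apply: contrapT => nUg; apply: nex; exists g.
pose u n := if n is k.+1 then g k else f.
have [K cK CKu] : exists2 K, compact K & forall n, CK e K (u n).
  apply: (long_space_CK hX (u := u)) => -[|k] /=; first exact: UC.
  by have [] := gP k.
have [W uW UW] := colimU K cK.
have [eps eps0 epsW] : exists2 eps : R, 0 < eps &
    forall h, Ccpt e h -> dlt rho f h eps -> W h.
  apply: uW.2; have : (U `&` CK e K) f by split=> //; exact: (CKu 0%N).
  by rewrite UW => -[].
have [n neps] := archimedean_invS_le archR _ eps0.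
have [Cgn fgn nUgn] := gP n.
have : (W `&` CK e K) (g n).
  split; last exact: (CKu n.+1).
  by apply: epsW => //; exact: dlt_le_trans fgn neps.
by rewrite -UW => -[].
Qed.

Lemma colim_openE (U : set (X -> M)) : colim_open e rho U <-> uopen e rho U.
Proof. by split; [exact: colim_open_uopen | exact: uopen_colim_open]. Qed.

End ColimitTopology.

Section CompatibleMetric.
Context {R : realType} {M : topologicalType} {rho : M -> M -> R}.
Hypothesis hrho : compatible_metric rho.

Lemma rhoxx x : rho x x = 0.
Proof. by case: hrho => _ rho_eq0 _ _ _; exact/rho_eq0. Qed.

Lemma nbhs_rho_ball x r : 0 < r -> nbhs x [set y | rho x y < r].
Proof.
move=> r0; apply: open_nbhs_nbhs; split; last by rewrite /= rhoxx.
case: hrho => _ _ _ tri rho_open; apply/rho_open => y /= xy.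
exists (r - rho x y) => [|z yz]; first by rewrite subr_gt0.
by apply: le_lt_trans (tri x y z) _; rewrite -ltrBrDl.
Qed.

Lemma nbhs_ex_rho_ball {x : M} {A : set M} : nbhs x A ->
  exists2 r, 0 < r & forall y, rho x y < r -> A y.
Proof.
rewrite nbhsE => -[B [oB Bx] BA]; case: hrho => _ _ _ _ rho_open.
by have [r r0 rB] := (rho_open B).1 oB x Bx; exists r => // y /rB /BA.
Qed.

End CompatibleMetric.

Section UniformContinuity.
Context {R : realType} {A B C : topologicalType}
  {rA : A -> A -> R} {rB : B -> B -> R} {rC : C -> C -> R}.
Hypotheses (hA : compatible_metric rA) (hB : compatible_metric rB)
  (hC : compatible_metric rC).

Lemma continuous_at_rho_ball2 {h : A -> B -> C} {a : A} {b : B} {eps : R} :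
  {for (a, b), continuous (fun p : A * B => h p.1 p.2)} -> 0 < eps ->
  exists2 r : R, 0 < r & forall a' b', rA a a' < r -> rB b b' < r ->
    rC (h a b) (h a' b') < eps.
Proof.
move=> hc eps0.
have [[P Q] [/= Pa Qb] PQ] := hc _ (nbhs_rho_ball hC (h a b) _ eps0).
have [r1 r10 r1P] := nbhs_ex_rho_ball hA Pa.
have [r2 r20 r2Q] := nbhs_ex_rho_ball hB Qb.
exists (Num.min r1 r2) => [|a' b']; first by rewrite lt_min r10 r20.
rewrite !lt_min => /andP [aa' _] /andP [_ bb'].
by apply: (PQ (a', b')); split; [exact: r1P | exact: r2Q].
Qed.

Lemma compact_uniform_continuous2 {h : A -> B -> C} {KA : set A} {KB : set B} :
  continuous (fun p : A * B => h p.1 p.2) -> compact KA -> compact KB ->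
  forall eps : R, 0 < eps -> exists2 d : R, 0 < d & forall a b a' b',
    KA a -> KB b -> rA a a' < d -> rB b b' < d -> rC (h a b) (h a' b') < eps.
Proof.
move=> hc cA cB eps eps0; have eps2 : 0 < eps / 2 by rewrite divr_gt0.
have [_ _ rC_sym rC_tri _] := hC.
have : \forall d \near 0^'+, (KA `*` KB) `<=` [set p | forall a' b',
    rA p.1 a' < d -> rB p.2 b' < d -> rC (h p.1 p.2) (h a' b') < eps].
  apply: ((compact_near_coveringP _).1 (compact_setX cA cB) R 0^'+) => -[a b] _.
  have [r r0 abr] := continuous_at_rho_ball2 (hc (a, b)) eps2.
  have r2 : 0 < r / 2 by rewrite divr_gt0.
  have near_ab : nbhs (a, b) [set p | rA a p.1 < r / 2 /\ rB b p.2 < r / 2].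
    exists ([set y | rA a y < r / 2], [set y | rB b y < r / 2]) => [|[? ?] //].
    by split; [exact: nbhs_rho_ball | exact: nbhs_rho_ball].
  near=> p d => a' b' pa' pb'.
  have [ap bp] : rA a p.1 < r / 2 /\ rB b p.2 < r / 2.
    exact: (near near_ab p).
  have dr : d < r / 2 by exact: (near (nbhs_right_lt r2) d).
  have [_ _ _ rA_tri _] := hA; have [_ _ _ rB_tri _] := hB.
  apply: le_lt_trans (rC_tri _ (h a b) _) _; rewrite rC_sym [eps]splitr.
  apply: ltrD; apply: abr.
  - exact: lt_trans ap (half_lt r0).
  - exact: lt_trans bp (half_lt r0).
  - apply: le_lt_trans (rA_tri _ p.1 _) _.
    by rewrite [r]splitr ltrD // (lt_trans pa').
  - apply: le_lt_trans (rB_tri _ p.2 _) _.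
    by rewrite [r]splitr ltrD // (lt_trans pb').
move=> /(filterI (nbhs_right_gt 0)) /filter_ex [d [d0 dP]].
by exists d => // a b a' b' KAa KBb; apply: (dP (a, b)).
Unshelve. all: by end_near.
Qed.

End UniformContinuity.

Lemma compact_uniform_continuous {R : realType} {A C : topologicalType}
    {rA : A -> A -> R} {rC : C -> C -> R} {g : A -> C} {KA : set A} :
  compatible_metric rA -> compatible_metric rC ->
  continuous g -> compact KA ->
  forall eps : R, 0 < eps -> exists2 d : R, 0 < d & forall a a', KA a ->
    rA a a' < d -> rC (g a) (g a') < eps.
Proof.
move=> hA hC gc cA eps eps0.
have gc1 : continuous (fun p : A * A => g p.1).
  by move=> [a b] W /= /gc ga; exists (g @^-1` W, setT) => [|[? ?] []//];
    split=> //; exact: filterT.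
have [d d0 gd] :=
  compact_uniform_continuous2 hA hA hC (h := fun a _ => g a) gc1 cA cA _ eps0.
by exists d => // a a' KAa aa'; exact: (gd a a a' a').
Qed.

Section UniformGroupTopology.
Context (X : topologicalType) (R : realType) (M : topologicalType)
  (mul : M -> M -> M) (inv : M -> M) (e : M) (rho : M -> M -> R).
Hypotheses (hG : is_topgroup mul inv e) (hrho : compatible_metric rho).

Lemma inv_e : inv e = e.
Proof.
by case: hG => _ mul1 mulV _ _; rewrite -[inv e](mul1 _).2 (mulV e).1.
Qed.

Lemma Ccpt_fmul (f g : X -> M) :
  Ccpt e f -> Ccpt e g -> Ccpt e (fmul mul f g).
Proof.
have [_ mul1 _ mulc _] := hG; move=> [cf sf] [cg sg]; split.
  move=> x; apply: continuous2_cvg; last exact: cg; last exact: cf.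
  exact: (mulc (f x, g x)).
apply: (compact_supp_comb sf sg) => x.
by rewrite /fmul => -> ->; rewrite (mul1 e).1.
Qed.

Lemma Ccpt_finv (f : X -> M) : Ccpt e f -> Ccpt e (Defs.finv inv f).
Proof.
have [_ _ _ _ invc] := hG; move=> [cf sf]; split.
  by move=> x; apply: continuous_comp; [exact: cf | exact: invc].
apply: (compact_supp_comb sf sf) => x.
by rewrite /Defs.finv => -> _; exact: inv_e.
Qed.

Lemma dlt_refl (f : X -> M) d : 0 < d -> dlt rho f f d.
Proof. by move=> d0; exists 0 => // x; rewrite (rhoxx hrho). Qed.

Lemma uopen_ball (f : X -> M) d : 0 < d ->
  uopen e rho [set g | Ccpt e g /\ dlt rho f g d].
Proof.
move=> d0; split=> [g [] //|g [Cg [d1 d1d fgd1]]].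
exists (d - d1) => [|h Ch [d2 d2d ghd2]]; first by rewrite subr_gt0.
split=> //; exists (d1 + d2); first by rewrite -ltrBrDl.
have [_ _ _ tri _] := hrho.
by move=> x; apply: le_trans (tri _ (g x) _) _; exact: lerD.
Qed.

Lemma uopen_fmul (U : set (X -> M)) f g : uopen e rho U ->
  Ccpt e f -> Ccpt e g -> U (fmul mul f g) ->
  exists V W, [/\ uopen e rho V, uopen e rho W, V f, W g &
    forall f' g', V f' -> W g' -> U (fmul mul f' g')].
Proof.
move=> [_ uU] Cf Cg Ufg; have [eps eps0 epsU] := uU _ Ufg.
have eps2 : 0 < eps / 2 by rewrite divr_gt0.
have [Lf cLf fLf] := Ccpt_compact_range Cf.
have [Lg cLg gLg] := Ccpt_compact_range Cg.
have [_ _ _ mulc _] := hG.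
have [d d0 mul_unif] :=
  compact_uniform_continuous2 hrho hrho hrho mulc cLf cLg _ eps2.
exists [set h | Ccpt e h /\ dlt rho f h d], [set h | Ccpt e h /\ dlt rho g h d].
split; [exact: uopen_ball | exact: uopen_ball | split=> //; exact: dlt_refl
       | split=> //; exact: dlt_refl | ].
move=> f' g' [Cf' /dlt_lt ff'] [Cg' /dlt_lt gg']; apply: epsU.
  exact: Ccpt_fmul.
exists (eps / 2); first exact: half_lt.
by move=> x; apply/ltW/mul_unif.
Qed.

Lemma uopen_finv (U : set (X -> M)) : uopen e rho U ->
  uopen e rho [set f | Ccpt e f /\ U (Defs.finv inv f)].
Proof.
move=> [_ uU]; split=> [f [] //|f [Cf Uif]].
have [eps eps0 epsU] := uU _ Uif; have eps2 : 0 < eps / 2 by rewrite divr_gt0.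
have [L cL fL] := Ccpt_compact_range Cf.
have [_ _ _ _ invc] := hG.
have [d d0 inv_unif] := compact_uniform_continuous hrho hrho invc cL _ eps2.
exists d => // g Cg /dlt_lt fg; split=> //; apply: epsU; first exact: Ccpt_finv.
exists (eps / 2); first exact: half_lt.
by move=> x; apply/ltW/inv_unif.
Qed.

Lemma uopen_group_topology :
  is_group_topology mul inv (Ccpt e) (uopen e rho : set (X -> M) -> Prop).
Proof.
split; [exact: uopen_topology | exact: Ccpt_fmul | exact: Ccpt_finv
       | exact: uopen_fmul | exact: uopen_finv].
Qed.

Lemma ACP_CK_long_space : long_space X -> ACP_CK X mul inv e rho.
Proof.
move=> hX; have colimE := colim_openE e rho hX (archi_archimedean R).
split=> [|tau [[tauC _ _ _] _ _ _ _] tauCK U tauU].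
  suff -> : colim_open e rho = uopen e rho :> (set (X -> M) -> Prop).
    exact: uopen_group_topology.
  by apply/funext => U; apply/propext; exact: colimE.
by split=> [|K cK]; [exact: tauC | exact: tauCK].
Qed.

End UniformGroupTopology.

Section CompactlySupportedBanach.
Context {K : numFieldType} {X : topologicalType} {M : completeNormedModType K}.

Notation Cc := (Ccpt (0 : M) : set (X -> M)).

Lemma Ccpt_cst0 : Cc (fun _ => 0).
Proof.
split; first exact: cst_continuous.
rewrite /supp (_ : [set x | _] = set0) ?closure0; first exact: compact0.
by apply/seteqP; split=> x.
Qed.

Lemma Ccpt_lincomb (a : K) {f g : X -> M} :
  Cc f -> Cc g -> Cc (fun x => a *: f x + g x).
Proof.
move=> [cf sf] [cg sg]; split.
  move=> x; apply: (@continuousD _ _ _ (fun x => a *: f x) g).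
    exact: (@continuousZl_tmp _ _ _ f a x (cf x)).
  exact: cg.
by apply: (compact_supp_comb sf sg) => x -> ->; rewrite scaler0 addr0.
Qed.

Lemma Ccpt_bounded f : Cc f -> exists B : K, forall x, `|f x| <= B.
Proof.
move=> [cf sf].
have : \forall B \near +oo, supp 0 f `<=` [set x | `|f x| < B].
  apply: ((compact_near_coveringP _).1 sf K +oo) => x _.
  have fx1 : \forall y \near x, `|f x - f y| < 1.
    exact: (cvgrPdist_lt _ _).1 (cf x) _ ltr01.
  have fxB : \forall B \near +oo, `|f x| + 1 < B.
    by apply: nbhs_pinfty_gt; rewrite realD ?normr_real ?real1.
  near=> y B; rewrite /=.
  have xy1 : `|f x - f y| < 1 by exact: (near fx1 y).
  have xB1 : `|f x| + 1 < B by exact: (near fxB B).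
  have := lerB_dist (f y) (f x); rewrite lerBlDl distrC => fyx.
  by apply: (le_lt_trans fyx); apply: lt_trans xB1; rewrite ltrD2l.
move=> /(filterI (nbhs_pinfty_gt (real0 K))) /filter_ex [B [B0 fB]].
exists B => x; have [sfx|nsfx] := pselect (supp 0 f x); first exact/ltW/fB.
by rewrite (notin_supp nsfx) normr0 ltW.
Unshelve. all: by end_near.
Qed.

Lemma uniformly_cauchy_cvg {T : Type} (u : nat -> T -> M) :
  (forall eps : K, 0 < eps -> exists N, forall m n x,
     (N <= m)%N -> (N <= n)%N -> `|u m x - u n x| < eps) ->
  exists f : T -> M, forall eps : K, 0 < eps ->
    exists N, forall n x, (N <= n)%N -> `|u n x - f x| < eps.
Proof.
move=> ucauchy.
have cvu x : cvg (u ^~ x @ \oo).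
  apply: cauchy_cvg; apply/cauchy_ballP => eps /ucauchy [N uN].
  pose tail := [set u m x | m in [set m | (N <= m)%N]].
  exists (tail, tail) => [|[_ _] [[m Nm <-] [n Nn <-]]].
    by split; apply: filterS (nbhs_infty_ge N) => m Nm; exists m.
  by rewrite -ball_normE /=; exact: uN.
exists (fun x => lim (u ^~ x @ \oo)) => eps eps0.
have eps2 : 0 < eps / 2 by rewrite divr_gt0.
have [N uN] := ucauchy _ eps2; exists N => n x Nn.
have : \forall m \near \oo,
    ball (lim (u ^~ x @ \oo)) (eps / 2) (u m x) /\ (N <= m)%N.
  by apply: filterI (nbhs_infty_ge N); exact: (cvu x _ (nbhsx_ballx _ _ eps2)).
move=> /filter_ex [m []]; rewrite -ball_normE /= => limm Nm.
apply: le_lt_trans (ler_distD (u m x) _ _) _; rewrite [eps]splitr.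
by apply: ltrD; [exact: uN | rewrite distrC].
Qed.

Lemma continuous_uniform_limit {T : topologicalType} (u : nat -> T -> M) f :
  (forall n, continuous (u n)) ->
  (forall eps : K, 0 < eps ->
     exists N, forall n x, (N <= n)%N -> `|u n x - f x| < eps) ->
  continuous f.
Proof.
move=> cu uf x; apply/cvgrPdist_lt => eps eps0.
have eps3 : 0 < eps / 3 by rewrite divr_gt0.
have [N uNf] := uf _ eps3.
apply: filterS ((cvgrPdist_lt _ _).1 (cu N x) _ eps3) => t uNxt.
apply: le_lt_trans (ler_distD (u N x) _ _) _.
apply: le_lt_trans (lerD (lexx _) (ler_distD (u N t) _ _)) _.
by rewrite addrA ltr_add3_third //; [rewrite distrC|]; exact: uNf.
Qed.

Lemma Ccpt_complete (hX : long_space X) (u : nat -> X -> M) :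
  (forall n, Cc (u n)) ->
  (forall eps : K, 0 < eps -> exists N, forall m n, (N <= m)%N -> (N <= n)%N ->
     dlt (@nrho K M) (u m) (u n) eps) ->
  exists2 f, Cc f & forall eps : K, 0 < eps ->
    exists N, forall n, (N <= n)%N -> dlt (@nrho K M) (u n) f eps.
Proof.
move=> Cu ucauchy.
have [f uf] : exists f : X -> M, forall eps : K, 0 < eps ->
    exists N, forall n x, (N <= n)%N -> `|u n x - f x| < eps.
  apply: uniformly_cauchy_cvg => eps /ucauchy [N uN].
  by exists N => m n x Nm Nn; exact: dlt_lt (uN m n Nm Nn) x.
have f0 x : (forall n, u n x = 0) -> f x = 0.
  move=> u0; apply: contrapT => /eqP; rewrite -normr_gt0 => fx0.
  by have [N /(_ N x (leqnn N))] := uf _ fx0; rewrite u0 sub0r normrN ltxx.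
have [C cC CuC] := long_space_CK hX Cu.
exists f => [|eps eps0].
  split; first by apply: (continuous_uniform_limit u) => // n; case: (Cu n).
  apply: (subclosed_compact _ cC); first exact: closed_closure.
  rewrite [X in _ `<=` X](closure_id C).1; last exact: compact_closed hX.1 cC.
  apply: closureS => x /= fx0; apply: contrapT => nCx; apply: fx0; apply: f0.
  by move=> n; apply: notin_supp => /(CuC n).2.
have [N uN] : exists N, forall n x, (N <= n)%N -> `|u n x - f x| < eps / 2.
  by apply: uf; rewrite divr_gt0.
exists N => n Nn; exists (eps / 2); first exact: half_lt.
by move=> x; exact/ltW/uN.
Qed.

End CompactlySupportedBanach.

Section Gluing.
Context {K : numFieldType} {X : topologicalType} {M : completeNormedModType K}
  {E : topologicalLmodType K} (phi : set X -> (X -> M) -> E).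
Hypotheses (phi_lin_cont : forall C, compact C ->
    lin_on (CK 0 C) (phi C) /\ cont_on (CK 0 C) (phi C))
  (phi_compat : forall C D, compact C -> compact D -> C `<=` D ->
    forall f, CK 0 C f -> phi D f = phi C f).

Notation Cc := (Ccpt (0 : M) : set (X -> M)).

Definition glue (f : X -> M) : E := phi (supp 0 f) f.

Lemma glueE {C : set X} {f : X -> M} :
  compact C -> CK 0 C f -> glue f = phi C f.
Proof.
by move=> cC [[cf sf] fC]; rewrite /glue (phi_compat _ _ sf cC fC) //; split.
Qed.

Lemma glue_linear : lin_on Cc glue.
Proof.
move=> a f g Cf Cg; have Cafg := Ccpt_lincomb a Cf Cg.
set afg := (fun x => a *: f x + g x) in Cafg *.
pose C := supp 0 f `|` supp 0 g `|` supp 0 afg.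
have cC : compact C.
  by apply: compactU; [apply: compactU; [case: Cf | case: Cg] | case: Cafg].
have CKf : CK 0 C f by split=> // x fx; left; left.
have CKg : CK 0 C g by split=> // x gx; left; right.
rewrite (glueE cC CKf) (glueE cC CKg) (glueE cC (_ : CK 0 C afg)).
  exact: (phi_lin_cont _ cC).1.
by split=> // x afgx; right.
Qed.

Lemma glue_continuous : long_space X -> archimedean K -> cont_on Cc glue.
Proof.
move=> hX archK W oW; exists (Cc `&` glue @^-1` W); last first.
  by apply/seteqP; split=> f [].
apply/(colim_openE _ _ hX archK); split=> [f [] //|C cC].
have [V uV phiV] := (phi_lin_cont _ cC).2 W oW.
exists V => //; rewrite -phiV; apply/seteqP; split=> f.
  by move=> [[_ Wf] CKf]; split=> //; rewrite /= -(glueE cC CKf).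
by move=> [CKf Wf]; split=> //; split; [case: CKf | rewrite /= (glueE cC CKf)].
Qed.

End Gluing.

Lemma colim_univ_Ccpt {K : numFieldType} {X : topologicalType}
    {M : completeNormedModType K} (E : topologicalLmodType K) :
  long_space X -> archimedean K -> colim_univ X M E.
Proof.
move=> hX archK phi phi_lin_cont phi_compat; split.
  exists (glue phi); split; [exact: glue_linear | exact: glue_continuous |].
  by move=> C cC f; exact: glueE.
move=> psi1 psi2 [_ [_ psi1E]] [_ [_ psi2E]] f Cf.
have cf : compact (supp 0 f) by case: Cf.
have CKf : CK 0 (supp 0 f) f by split.
by rewrite (psi1E _ cf _ CKf) (psi2E _ cf _ CKf).
Qed.

Lemma banach_part_long_space {K : numFieldType} {X : topologicalType}
    {M : completeNormedModType K} :
  long_space X -> archimedean K -> banach_part X M.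
Proof.
move=> hX archK; split.
- split; [exact: Ccpt_cst0 | move=> a f g; exact: Ccpt_lincomb
         | exact: Ccpt_bounded | exact: Ccpt_complete].
- by move=> C cC U uU; exists U.
- by move=> E; exact: colim_univ_Ccpt.
- by move=> E; exact: colim_univ_Ccpt.
Qed.

Theorem mainTheorem1 (X : topologicalType) (hX : long_space X) :
  (forall (R : realType) (M : topologicalType) (mul : M -> M -> M)
          (inv : M -> M) (e : M) (rho : M -> M -> R),
     is_topgroup mul inv e -> compatible_metric rho ->
     [/\ (forall C D : set X, compact C -> compact D -> C `<=` D ->
            sub_open e rho (CK e D) (CK e D `\` CK e C)),
         ACP_CK X mul inv e rho &
         forall U : set (X -> M), colim_open e rho U <-> uopen e rho U]) /\
  (forall R : realType,
     (forall M : completeNormedModType R, banach_part X M) /\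
     (forall M : completeNormedModType R[i], banach_part X M)).
Proof.
split=> [R M mul inv e rho hG hrho | R].
  have [rho_ge0 rho_eq0 _ _ _] := hrho.
  split=> [C D cC _ _||U].
  - exact: sub_open_CKD hX.1 _ _ rho_ge0 rho_eq0 cC.
  - exact: ACP_CK_long_space.
  - exact: colim_openE hX (archi_archimedean R) U.
have archR := archi_archimedean R.
split=> M; apply: (banach_part_long_space hX) => //.
exact: archimedean_complex.
Qed.
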